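(* Let $m\ge3$ be odd, $n\ge2$, and let $\mathbf{c}=(c_1,\dots,c_n)^\top$ have all components positive and pairwise distinct. Let $\mathcal{A}=(a_{i_1\dots i_m})$ be the $m$th order $n$-dimensional tensor with $a_{i_1\dots i_m}=\frac{1}{c_{i_1}+\cdots+c_{i_m}}$. Then $\mathcal{A}$ is strongly positive definite.
   Context: For $\mathbf{x}\in\mathbb{R}^n$, $\mathcal{A}\mathbf{x}^{m-1}$ is the vector with $i$th component $\sum_{i_2,\dots,i_m}a_{ii_2\dots i_m}x_{i_2}\cdots x_{i_m}$. For odd $m$ and symmetric $\mathcal{A}$, $\mathcal{A}$ is strongly positive definite if $\mathcal{A}\mathbf{x}^{m-1}>\mathbf{0}$ componentwise for all nonzero $\mathbf{x}\in\mathbb{R}^n$. *)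

From mathcomp Require Import all_boot all_order all_algebra all_fingroup.
Set Implicit Arguments. Unset Strict Implicit. Unset Printing Implicit Defensive.
Import Order.TTheory GRing.Theory Num.Theory.
Local Open Scope ring_scope.

(* An m-th order n-dimensional real tensor: entries indexed by maps
   (i_1,...,i_m) : 'I_m -> 'I_n (position k holds index i_{k+1}). *)
Definition tensor (R : Type) (m n : nat) := {ffun 'I_m -> 'I_n} -> R.

Definition tsymmetric (R : Type) (m n : nat) (A : tensor R m n) : Prop :=
  forall (s : {perm 'I_m}) (f : {ffun 'I_m -> 'I_n}),
    A [ffun k => f (s k)] = A f.

(* (A x^{m-1})_i = sum_{i_2..i_m} a_{i i_2 .. i_m} x_{i_2} ... x_{i_m}:
   sum over index maps whose first position (position 0) is i. *)
Definition tapply (R : numDomainType) (m n : nat) (A : tensor R m n)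
    (x : 'I_n -> R) (i : 'I_n) : R :=
  \sum_(f : {ffun 'I_m -> 'I_n} | [forall k : 'I_m, (val k == 0%N) ==> (f k == i)])
     A f * \prod_(k : 'I_m | val k != 0%N) x (f k).

(* For odd m and symmetric A: strongly positive definite iff
   A x^{m-1} > 0 componentwise for every nonzero x. *)
Definition strongly_pd (R : numDomainType) (m n : nat) (A : tensor R m n) : Prop :=
  tsymmetric A /\
  forall x : 'I_n -> R, (exists j, x j != 0) -> forall i, 0 < tapply A x i.

Definition cauchy_tensor (R : numFieldType) (m n : nat) (c : 'I_n -> R) : tensor R m n :=
  fun f => (\sum_(k : 'I_m) c (f k))^-1.
Arguments cauchy_tensor {R} m {n} c _.

(* Write m = 2q + 1.  The i-th component of A x^(m-1) is then the quadratic
   form  sum_(J,K) y_J y_K / (a_J + a_K)  over multi-indices J, K in [n]^q,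
   with  a_J = c_i / 2 + sum_t c_(J t) > 0  and  y_J = prod_t x_(J t).
   Such a Cauchy-type form is positive as soon as some y_J <> 0 is the only
   nonzero coordinate with weight a_J: splitting 1/(a + b) at p = a_L
   writes the form as a square plus the same form in coordinates
   y_K (a_K - p)/(a_K + p), which kills the coordinate L, so one can induct
   on the support.  The constant multi-index at the point of the support of x
   where c is largest is such a J, because c is injective. *)

From mathcomp Require Import all_boot all_order all_algebra all_fingroup.
From mathcomp Require Import reals ring.
Import Order.TTheory GRing.Theory Num.Theory.
Set Implicit Arguments. Unset Strict Implicit.
Local Open Scope ring_scope.

Definition cauchy_form (R : numFieldType) (I : finType) (a z : I -> R) : R :=
  \sum_k \sum_l z k * z l / (a k + a l).

Section CauchyFormPositive.

Variables (R : realFieldType) (I : finType) (a : I -> R).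
Hypothesis a_gt0 : forall i, 0 < a i.

(* [1 / (a + b) = 2 p / ((a + p) (b + p)) + (a - p) (b - p) / ((a + p) (b + p) (a + b))] *)
Lemma cauchy_form_pivot (z : I -> R) (p : R) : 0 < p ->
  cauchy_form a z = 2 * p * (\sum_k z k / (a k + p)) ^+ 2
                    + cauchy_form a (fun k => z k * ((a k - p) / (a k + p))).
Proof.
move=> p_gt0; rewrite /cauchy_form expr2 mulr_suml mulr_sumr -big_split /=.
apply: eq_bigr => k _; rewrite mulr_sumr mulr_sumr -big_split /=.
apply: eq_bigr => l _.
have akl : a k + a l != 0 by rewrite gt_eqF ?addr_gt0.
have akp : a k + p != 0 by rewrite gt_eqF ?addr_gt0.
have alp : a l + p != 0 by rewrite gt_eqF ?addr_gt0.
by field; rewrite akl akp alp.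
Qed.

Lemma cauchy_form_supported1 (z : I -> R) (k : I) :
  (forall l, l != k -> z l = 0) -> cauchy_form a z = z k ^+ 2 / (a k + a k).
Proof.
move=> z_off_k; rewrite /cauchy_form (bigD1 k) //= [X in _ + X]big1 => [|j jk].
  rewrite addr0 (bigD1 k) //= [X in _ + X]big1 => [|l lk]; last first.
    by rewrite (z_off_k l lk) mulr0 mul0r.
  by rewrite addr0 expr2.
by rewrite big1 // => l _; rewrite (z_off_k j jk) !mul0r.
Qed.

Lemma cauchy_form_gt0 (z : I -> R) (k : I) :
  z k != 0 -> (forall l, l != k -> a l = a k -> z l = 0) -> 0 < cauchy_form a z.
Proof.
have [N] := ubnP #|[pred l | z l != 0]|.
elim: N z => [//|N IH] z supp_z zk isolated_k.
case: (pickP [pred l | (l != k) && (z l != 0)]) => [l /andP [lk zl] | z_off_k].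
  have alk : a l != a k by apply: contra zl => /eqP /(isolated_k l lk) ->.
  pose w j := z j * ((a j - a l) / (a j + a l)).
  have w_supp_sub : [pred j | w j != 0] \proper [pred j | z j != 0].
    apply/properP; split; last by exists l; rewrite !inE ?zl // /w subrr mul0r mulr0 eqxx.
    by apply/subsetP => j; rewrite !inE /w; apply: contra => /eqP ->; rewrite mul0r.
  have wk : w k != 0.
    have akl : a k + a l != 0 by rewrite gt_eqF ?addr_gt0.
    by rewrite /w !mulf_neq0 ?invr_neq0 // subr_eq0 eq_sym.
  have w_gt0 : 0 < cauchy_form a w.
    apply: IH wk _ => [|j jk /(isolated_k j jk) zj]; last by rewrite /w zj mul0r.
    by apply: leq_trans (proper_card w_supp_sub) _; rewrite -ltnS.
  rewrite (cauchy_form_pivot z (a_gt0 l)) -/w ltr_wpDl // mulr_ge0 ?sqr_ge0 //.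
  by rewrite mulr_ge0 ?ltW.
rewrite (cauchy_form_supported1 (k := k)) => [|l lk]; last first.
  by apply/eqP; have := z_off_k l; rewrite /= lk => /negbT; rewrite negbK.
by rewrite divr_gt0 ?addr_gt0 // exprn_even_gt0.
Qed.

End CauchyFormPositive.

Definition ffun_join (T : Type) (m1 m2 : nat)
    (f1 : {ffun 'I_m1 -> T}) (f2 : {ffun 'I_m2 -> T}) : {ffun 'I_(m1 + m2) -> T} :=
  [ffun k => match split k with inl a => f1 a | inr b => f2 b end].

Section FfunJoin.

Variables (T : Type) (m1 m2 : nat).

Lemma ffun_join_lshift (f1 : {ffun 'I_m1 -> T}) (f2 : {ffun 'I_m2 -> T}) a :
  ffun_join f1 f2 (lshift m2 a) = f1 a.
Proof. by rewrite ffunE (unsplitK (inl a)). Qed.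

Lemma ffun_join_rshift (f1 : {ffun 'I_m1 -> T}) (f2 : {ffun 'I_m2 -> T}) b :
  ffun_join f1 f2 (rshift m1 b) = f2 b.
Proof. by rewrite ffunE (unsplitK (inr b)). Qed.

Lemma big_ffun_join (R : Type) (idx : R) (op : Monoid.law idx) (F : T -> R)
    (f1 : {ffun 'I_m1 -> T}) (f2 : {ffun 'I_m2 -> T}) :
  \big[op/idx]_k F (ffun_join f1 f2 k)
    = op (\big[op/idx]_a F (f1 a)) (\big[op/idx]_b F (f2 b)).
Proof.
rewrite big_split_ord; congr (op _ _); apply: eq_bigr => i _.
  by rewrite ffun_join_lshift.
by rewrite ffun_join_rshift.
Qed.

Lemma ffun_join_bij :
  bijective (fun f12 : {ffun 'I_m1 -> T} * {ffun 'I_m2 -> T} => ffun_join f12.1 f12.2).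
Proof.
exists (fun f : {ffun 'I_(m1 + m2) -> T} =>
  ([ffun a => f (lshift m2 a)] : {ffun 'I_m1 -> T},
   [ffun b => f (rshift m1 b)] : {ffun 'I_m2 -> T})).
  move=> [f1 f2] /=; congr pair; apply/ffunP => i.
    by rewrite ffunE ffun_join_lshift.
  by rewrite ffunE ffun_join_rshift.
move=> f; apply/ffunP => k; rewrite ffunE -[in RHS](splitK k).
by case: (split k) => i; rewrite ffunE.
Qed.

End FfunJoin.

Lemma big_ffun_split (R : Type) (idx : R) (op : Monoid.com_law idx)
    (T : finType) (m1 m2 : nat) (F : {ffun 'I_(m1 + m2) -> T} -> R) :
  \big[op/idx]_f F f = \big[op/idx]_f1 \big[op/idx]_f2 F (ffun_join f1 f2).
Proof.
rewrite pair_bigA (reindex _ (onW_bij _ (@ffun_join_bij T m1 m2))) /=.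
by apply: eq_bigr => -[].
Qed.

Lemma tapplyE (R : numDomainType) (m n : nat) (A : tensor R (1 + m) n)
    (x : 'I_n -> R) (i : 'I_n) :
  tapply A x i = \sum_(g : {ffun 'I_m -> 'I_n})
                   A (ffun_join [ffun => i] g) * \prod_k x (g k).
Proof.
rewrite /tapply big_mkcond big_ffun_split (bigD1 [ffun => i]) //=.
rewrite [X in _ + X]big1 ?addr0.
  apply: eq_bigr => g _; rewrite ifT; last first.
    apply/forallP => k; apply/implyP; rewrite ffunE.
    by case: splitP => [a _ _ | b ->]; rewrite ?ffunE.
  congr (_ * _); rewrite big_split_ord /= big_pred0 ?mul1r => [|a]; last by rewrite ord1.
  by apply: eq_bigr => b _; rewrite ffun_join_rshift.
move=> f1 f1_ne_i; rewrite big1 // => g _; rewrite ifF //.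
apply: contraNF f1_ne_i => /forallP P_join; apply/eqP/ffunP => a.
rewrite ord1 !ffunE; have := P_join (lshift m ord0).
by rewrite ffun_join_lshift => /eqP.
Qed.

Lemma cauchy_tensor_sym (R : numFieldType) (m n : nat) (c : 'I_n -> R) :
  tsymmetric (cauchy_tensor m c).
Proof.
move=> s f; rewrite /cauchy_tensor; congr _^-1.
by rewrite [RHS](reindex_inj (@perm_inj _ s)); apply: eq_bigr => k _; rewrite ffunE.
Qed.

Lemma tapply_cauchy_tensor_odd (R : numFieldType) (q n : nat) (c x : 'I_n -> R) (i : 'I_n) :
  tapply (cauchy_tensor (1 + (q + q)) c) x i
    = cauchy_form (fun J : {ffun 'I_q -> 'I_n} => c i / 2 + \sum_t c (J t))
                  (fun J => \prod_t x (J t)).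
Proof.
rewrite tapplyE big_ffun_split /cauchy_form.
apply: eq_bigr => J _; apply: eq_bigr => K _.
rewrite /cauchy_tensor !big_ffun_join /= big_ord1 ffunE mulrC.
by congr (_ * _^-1); rewrite {1}(splitr (c i)); ring.
Qed.

Lemma ffun_eq_const_of_sum_max (R : realDomainType) (I : finType) (T : eqType)
    (c : T -> R) (j0 : T) (J : {ffun I -> T}) :
  injective c -> (forall t, c (J t) <= c j0) ->
  \sum_t c (J t) = \sum_(t : I) c j0 -> J = [ffun => j0].
Proof.
move=> c_inj J_le sum_eq; apply/ffunP => t; rewrite ffunE; apply/eqP.
have J_leif s : true -> c (J s) <= c j0 ?= iff (J s == j0).
  by move=> _; split; rewrite ?J_le ?(inj_eq c_inj).
have := (leif_sum J_leif).2; rewrite sum_eq eqxx => /esym/forall_inP.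
by apply.
Qed.

Theorem corollary3p6 (R : realType) (m n : nat) (c : 'I_n -> R) :
  (3 <= m)%N -> odd m -> (2 <= n)%N ->
  (forall i, 0 < c i) -> injective c ->
  strongly_pd (cauchy_tensor m c).
Proof.
move=> _ m_odd _ c_gt0 c_inj.
have [q ->] : exists q, m = (1 + (q + q))%N.
  by exists m./2; rewrite addnn -[LHS](odd_double_half m) m_odd.
split=> [|x [j1 xj1] i]; first exact: cauchy_tensor_sym.
have [j0 xj0 j0_max] : exists2 j0, x j0 != 0 & forall j, x j != 0 -> c j <= c j0.
  by case: (arg_maxP c (P := fun j => x j != 0) xj1) => j0; exists j0.
rewrite tapply_cauchy_tensor_odd; apply: (@cauchy_form_gt0 _ _ _ _ _ [ffun => j0]).
- by move=> J; rewrite ltr_wpDr ?sumr_ge0 ?divr_gt0 // => t _; apply: ltW.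
- by apply/prodf_neq0 => t _; rewrite ffunE.
move=> J J_ne /addrI J_sum; apply/eqP; apply: contraR J_ne => /prodf_neq0 xJ_neq0.
apply/eqP/(ffun_eq_const_of_sum_max c_inj) => [t|]; first exact/j0_max/xJ_neq0.
by rewrite J_sum; apply: eq_bigr => t _; rewrite ffunE.
Qed.
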